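(* Let $V$ be the simple branching: the quotient of the disjoint union $R_1\sqcup R_2$ of two copies of $\mathbb{R}$ by the equivalence relation identifying the point of coordinate $t$ in $R_1$ with the point of coordinate $t$ in $R_2$ whenever $t<0$ (and identifying nothing else). Then $V$ admits two $C^\infty$-differentiable structures that are not isomorphic, i.e. there is no homeomorphism from $V$ with the first structure to $V$ with the second structure which is $C^\infty$ and has a $C^\infty$ inverse.
   Context: A topological manifold need not be Hausdorff. A $C^r$-differentiable structure ($r$ a positive integer or $\infty$) on an $n$-dimensional manifold $V$ is given by an atlas of charts $h_i:\mathbb{R}^n\to V$ (homeomorphisms onto open subsets covering $V$) such that every transition map $h_j^{-1}h_i$, from $h_i^{-1}(U_i\cap U_j)$ to $h_j^{-1}(U_i\cap U_j)$, is a $C^r$ homeomorphism between open subsets of $\mathbb{R}^n$; two atlases define the same structure if their union is still such an atlas. A map between $C^r$ manifolds is $C^r$ if it is $C^r$ when read in charts. *)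

From Stdlib Require Import Reals Lra ProofIrrelevance.
From Coquelicot Require Import Coquelicot.
Open Scope R_scope.

(** V is the quotient of R_1 ⊔ R_2 (two copies of R) identifying the point t
    of R_1 with the point t of R_2 whenever t < 0.  We realise the quotient by
    canonical representatives: (true, t) is the class of t in R_1 (and, for
    t < 0, also of t in R_2); (false, t) with 0 <= t is the class of t in R_2. *)
Definition V : Type := {p : bool * R | fst p = true \/ 0 <= snd p}.

Definition i1 (t : R) : V := exist _ (true, t) (or_introl eq_refl).
Definition i2 (t : R) : V :=
  match Rlt_dec t 0 with
  | left _ => i1 t
  | right H => exist _ (false, t) (or_intror (Rnot_lt_le _ _ H))
  end.

Lemma V_cover : forall v : V, (exists t, v = i1 t) \/ (exists t, v = i2 t).
Proof.
  intros [[b t] H]. destruct b.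
  - left. exists t. unfold i1. f_equal. apply proof_irrelevance.
  - right. exists t. unfold i2. destruct (Rlt_dec t 0) as [Hl|Hn].
    + exfalso. destruct H as [H|H]; [discriminate|simpl in H; lra].
    + f_equal. apply proof_irrelevance.
Qed.

Lemma i1_inj : forall s t, i1 s = i1 t -> s = t.
Proof. intros s t H. unfold i1 in H. inversion H. reflexivity. Qed.

Lemma i2_inj : forall s t, i2 s = i2 t -> s = t.
Proof.
  intros s t H. unfold i2, i1 in H.
  destruct (Rlt_dec s 0); destruct (Rlt_dec t 0); inversion H; reflexivity.
Qed.

Lemma i1_i2 : forall s t, i1 s = i2 t <-> (s = t /\ t < 0).
Proof.
  intros s t; split.
  - intros H. unfold i2, i1 in H. destruct (Rlt_dec t 0).
    + inversion H. split; auto.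
    + inversion H.
  - intros [-> Ht]. unfold i2. destruct (Rlt_dec t 0); [reflexivity|contradiction].
Qed.

Definition openV (U : V -> Prop) : Prop :=
  open (fun t => U (i1 t)) /\ open (fun t => U (i2 t)).

Definition contRV (h : R -> V) : Prop :=
  forall W : V -> Prop, openV W -> open (fun t => W (h t)).
Definition contVV (f : V -> V) : Prop :=
  forall W : V -> Prop, openV W -> openV (fun v => W (f v)).

Definition is_chart (h : R -> V) : Prop :=
  (forall s t, h s = h t -> s = t) /\
  contRV h /\
  openV (fun v => exists t, h t = v) /\
  (forall O : R -> Prop, open O -> openV (fun v => exists t, O t /\ h t = v)).

(** g : R -> R is C^oo on the open set D (only values near D matter). *)
Definition smooth_on (D : R -> Prop) (g : R -> R) : Prop :=
  forall (n : nat) (x : R), D x -> ex_derive_n g n x.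

(** The map k^{-1} o f o h, defined on h^{-1}(f^{-1}(image k)), is C^oo. *)
Definition smooth_in_charts (h : R -> V) (f : V -> V) (k : R -> V) : Prop :=
  exists g : R -> R,
    (forall t, (exists s, k s = f (h t)) -> k (g t) = f (h t)) /\
    smooth_on (fun t => exists s, k s = f (h t)) g.

Definition Cinf_atlas (I : Type) (h : I -> R -> V) : Prop :=
  (forall i, is_chart (h i)) /\
  (forall v : V, exists i t, h i t = v) /\
  (forall i j, smooth_in_charts (h i) (fun v => v) (h j)).

Definition Cinf_map (I : Type) (h : I -> R -> V) (J : Type) (k : J -> R -> V)
  (f : V -> V) : Prop :=
  forall i j, smooth_in_charts (h i) f (k j).

Definition Cinf_isomorphic (I : Type) (h : I -> R -> V) (J : Type) (k : J -> R -> V)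
  : Prop :=
  exists f g : V -> V,
    (forall v, g (f v) = v) /\ (forall v, f (g v) = v) /\
    contVV f /\ contVV g /\
    Cinf_map I h J k f /\ Cinf_map J k I h g.

(* The two structures share the chart [i1]; the second replaces [i2] by [i2 o (s |-> s|s|)],
   whose transition with [i1] on the negative half-line is s |-> -s^2, a diffeomorphism there.
   Read a diffeomorphism f from the first structure to the second in charts near the two
   non-separated points [i1 0] and [i2 0].  Their images are distinct but are approached by the
   same points from the left, so by continuity they cannot be read in the same chart: one
   representative r is in [i1], the other q in the twisted chart, and r = -q^2 left of 0.
   Since r(0) <= 0 and the images differ, r(0) = q(0) = 0, hence r'(0) = 0; yet r has a
   differentiable left inverse, the inverse diffeomorphism read in [i1]. *)

From Stdlib Require Import Reals Lra.
From Coquelicot Require Import Coquelicot.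
Open Scope R_scope.

Lemma at_left_of_locally (x : R) (P : R -> Prop) : locally x P -> at_left x P.
Proof. apply filter_le_within. Qed.

Lemma continuous_at_left (f : R -> R) (x : R) :
  continuous f x -> filterlim f (at_left x) (locally (f x)).
Proof. apply filterlim_filter_le_1, filter_le_within. Qed.

Lemma continuous_at_left_unique (f g : R -> R) (x : R) :
  continuous f x -> continuous g x -> at_left x (fun t => f t = g t) -> f x = g x.
Proof.
  intros Hf Hg Hfg.
  apply (filterlim_locally_unique f _ _ (continuous_at_left f x Hf)).
  apply (filterlim_ext_loc g f); [|exact (continuous_at_left g x Hg)].
  apply (filter_imp _ _ (fun t => @eq_sym _ (f t) (g t)) Hfg).
Qed.

Lemma continuous_at_left_le (f : R -> R) (x c : R) :
  continuous f x -> at_left x (fun t => f t <= c) -> f x <= c.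
Proof.
  intros Hf Hle.
  exact (closed_filterlim_loc f _ _ (continuous_at_left f x Hf) Hle (closed_le c)).
Qed.

Lemma is_derive_at_left_quotient (f : R -> R) (x l : R) :
  is_derive f x l -> filterlim (fun y => (f y - f x) / (y - x)) (at_left x) (locally l).
Proof.
  intros Hf. apply is_derive_Reals in Hf.
  apply filterlim_locally. intros eps.
  destruct (Hf eps (cond_pos eps)) as [d Hd].
  exists d. intros y Hy Hyx.
  assert (Hyx0 : y - x <> 0) by lra.
  assert (Hq := Hd (y - x) Hyx0 Hy).
  rewrite Rplus_minus in Hq. exact Hq.
Qed.

Lemma is_derive_at_left_unique (f g : R -> R) (x l l' : R) :
  is_derive f x l -> is_derive g x l' -> f x = g x ->
  at_left x (fun t => f t = g t) -> l = l'.
Proof.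
  intros Hf Hg E0 Hfg.
  apply (filterlim_locally_unique _ _ _ (is_derive_at_left_quotient f x l Hf)).
  apply (filterlim_ext_loc (fun y => (g y - g x) / (y - x))).
  - apply (filter_imp (fun t => f t = g t)); [|exact Hfg].
    intros t E. now rewrite E, E0.
  - exact (is_derive_at_left_quotient g x l' Hg).
Qed.

Lemma is_derive_neq0_of_left_inverse (r c : R -> R) (x l : R) :
  locally x (fun t => c (r t) = t) -> is_derive r x l -> ex_derive c (r x) -> l <> 0.
Proof.
  intros Hcr Hr [m Hc] ->.
  assert (Hid : is_derive (fun t => c (r t)) x 1).
  { apply (is_derive_ext_loc (fun t => t)); [|exact (is_derive_id x)].
    apply (filter_imp _ _ (fun t => @eq_sym _ (c (r t)) t) Hcr). }
  assert (Hcomp := is_derive_comp c r x m 0 Hc Hr).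
  apply is_derive_unique in Hid, Hcomp.
  rewrite Hid in Hcomp. change (1 = 0 * m) in Hcomp. lra.
Qed.

Lemma smooth_on_ext (D : R -> Prop) (f g : R -> R) :
  open D -> (forall x, D x -> f x = g x) -> smooth_on D f -> smooth_on D g.
Proof.
  intros HD Hfg Hf n x Hx.
  apply (ex_derive_n_ext_loc f); [|exact (Hf n x Hx)].
  exact (filter_imp D _ Hfg (HD x Hx)).
Qed.

Lemma smooth_on_id (D : R -> Prop) : smooth_on D (fun x => x).
Proof.
  intros n x _. apply (ex_derive_n_ext (fun x => x ^ 1)); [apply pow_1|apply ex_derive_n_pow].
Qed.

Lemma smooth_on_opp (D : R -> Prop) (f : R -> R) :
  smooth_on D f -> smooth_on D (fun x => - f x).
Proof. intros Hf n x Hx. exact (ex_derive_n_opp f n x (Hf n x Hx)). Qed.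

Lemma smooth_on_comp_opp (D : R -> Prop) (f : R -> R) :
  open D -> smooth_on D f -> smooth_on (fun x => D (- x)) (fun x => f (- x)).
Proof.
  intros HD Hf n x Hx. apply ex_derive_n_comp_opp.
  apply (filter_imp D); [intros y Hy k _; exact (Hf k y Hy)|exact (HD _ Hx)].
Qed.

Lemma smooth_on_derivative_tower (D : R -> Prop) (F : nat -> R -> R) :
  open D -> (forall n x, D x -> is_derive (F n) x (F (S n) x)) -> smooth_on D (F O).
Proof.
  intros HD HF.
  assert (Hder : forall n, (forall y, D y -> Derive_n (F O) n y = F n y) ->
                 forall x, D x -> is_derive (Derive_n (F O) n) x (F (S n) x)).
  { intros n Hn x Hx. apply (is_derive_ext_loc (F n)); [|exact (HF n x Hx)].
    apply (filter_imp D); [intros y Hy; symmetry; exact (Hn y Hy)|exact (HD x Hx)]. }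
  assert (Hn : forall n x, D x -> Derive_n (F O) n x = F n x).
  { induction n as [|n IH]; intros x Hx; [reflexivity|].
    exact (is_derive_unique _ _ _ (Hder n IH x Hx)). }
  intros [|n] x Hx; [exact I|].
  exact (ex_intro _ _ (Hder n (Hn n) x Hx)).
Qed.

Fixpoint falling_factorial (a : R) (n : nat) : R :=
  match n with O => 1 | S n => falling_factorial a n * (a - INR n) end.

Lemma smooth_on_Rpower (a : R) : smooth_on (fun u => 0 < u) (fun u => Rpower u a).
Proof.
  pose (F n u := falling_factorial a n * Rpower u (a - INR n)).
  apply (smooth_on_ext _ (F O)); [apply open_gt| |].
  - intros u _. unfold F; simpl. rewrite Rminus_0_r. ring.
  - apply smooth_on_derivative_tower; [apply open_gt|].
    intros n u Hu. unfold F.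
    replace (falling_factorial a (S n) * Rpower u (a - INR (S n)))
      with (falling_factorial a n * ((a - INR n) * Rpower u (a - INR n - 1)))
      by (rewrite S_INR; simpl; unfold Rminus; rewrite Ropp_plus_distr, Rplus_assoc; ring).
    apply is_derive_scal, is_derive_Reals, derivable_pt_lim_power, Hu.
Qed.

Definition signed_sq (s : R) : R := s * Rabs s.
(* Written without a case split on the sign of [t], so that continuity is immediate. *)
Definition signed_sqrt (t : R) : R := sqrt ((Rabs t + t) / 2) - sqrt ((Rabs t - t) / 2).

Lemma signed_sq_nonneg (s : R) : 0 <= s -> signed_sq s = s * s.
Proof. intros Hs. unfold signed_sq. now rewrite Rabs_pos_eq. Qed.

Lemma signed_sq_neg (s : R) : s < 0 -> signed_sq s = - (s * s).
Proof. intros Hs. unfold signed_sq. rewrite Rabs_left; lra. Qed.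

Lemma signed_sq_lt0 (s : R) : signed_sq s < 0 <-> s < 0.
Proof.
  unfold signed_sq. destruct (Rlt_or_le s 0); [rewrite Rabs_left|rewrite Rabs_pos_eq]; nra.
Qed.

Lemma signed_sqrt_nonneg (t : R) : 0 <= t -> signed_sqrt t = sqrt t.
Proof.
  intros Ht. unfold signed_sqrt. rewrite Rabs_pos_eq by exact Ht.
  replace ((t + t) / 2) with t by field. replace ((t - t) / 2) with 0 by field.
  rewrite sqrt_0. ring.
Qed.

Lemma signed_sqrt_neg (t : R) : t < 0 -> signed_sqrt t = - sqrt (- t).
Proof.
  intros Ht. unfold signed_sqrt. rewrite Rabs_left by exact Ht.
  replace ((- t + t) / 2) with 0 by field. replace ((- t - t) / 2) with (- t) by field.
  rewrite sqrt_0. ring.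
Qed.

Lemma signed_sqrtK (s : R) : signed_sqrt (signed_sq s) = s.
Proof.
  destruct (Rlt_or_le s 0) as [Hs|Hs].
  - rewrite signed_sq_neg, signed_sqrt_neg by nra.
    rewrite Ropp_involutive. replace (s * s) with (- s * - s) by ring.
    rewrite sqrt_square by lra. ring.
  - rewrite signed_sq_nonneg, signed_sqrt_nonneg by nra. now apply sqrt_square.
Qed.

Lemma signed_sqK (t : R) : signed_sq (signed_sqrt t) = t.
Proof.
  destruct (Rlt_or_le t 0) as [Ht|Ht].
  - assert (Hpos : 0 < sqrt (- t)) by (apply sqrt_lt_R0; lra).
    rewrite signed_sqrt_neg, signed_sq_neg by lra.
    replace (- (- sqrt (- t) * - sqrt (- t))) with (- (sqrt (- t) * sqrt (- t))) by ring.
    rewrite sqrt_sqrt; lra.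
  - rewrite signed_sqrt_nonneg, signed_sq_nonneg by (exact Ht || apply sqrt_pos).
    now apply sqrt_sqrt.
Qed.

Lemma continuous_signed_sq (s : R) : continuous signed_sq s.
Proof. exact (continuous_mult (fun x => x) Rabs s (continuous_id s) (continuous_Rabs s)). Qed.

Lemma continuous_signed_sqrt (t : R) : continuous signed_sqrt t.
Proof.
  assert (Hhalf : forall g : R -> R, continuous g t ->
            continuous (fun x => sqrt ((Rabs x + g x) / 2)) t).
  { intros g Hg. apply (continuous_comp (fun x => (Rabs x + g x) / 2) sqrt);
      [|apply continuous_sqrt].
    apply (continuous_mult (fun x => Rabs x + g x) (fun _ => / 2)); [|apply continuous_const].
    exact (continuous_plus Rabs g t (continuous_Rabs t) Hg). }
  apply (continuous_minus (fun x => sqrt ((Rabs x + x) / 2)) (fun x => sqrt ((Rabs x + - x) / 2)));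
    apply Hhalf; [apply continuous_id|].
  apply continuity_pt_filterlim, continuity_pt_opp, continuity_pt_id.
Qed.

Lemma smooth_on_signed_sq : smooth_on (fun s => s < 0) signed_sq.
Proof.
  apply (smooth_on_ext _ (fun s => - s ^ 2)); [apply open_lt| |].
  - intros s Hs. rewrite signed_sq_neg by exact Hs. ring.
  - apply smooth_on_opp. intros n s _. apply ex_derive_n_pow.
Qed.

Lemma smooth_on_signed_sqrt : smooth_on (fun t => t < 0) signed_sqrt.
Proof.
  apply (smooth_on_ext _ (fun t => - Rpower (- t) (/ 2))); [apply open_lt| |].
  - intros t Ht. rewrite signed_sqrt_neg, Rpower_sqrt by lra. reflexivity.
  - apply smooth_on_opp. intros n t Ht.
    apply (smooth_on_comp_opp _ _ (open_gt 0) (smooth_on_Rpower (/ 2))). lra.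
Qed.

Lemma i2_neg (t : R) : t < 0 -> i2 t = i1 t.
Proof. intros Ht. symmetry. now apply i1_i2. Qed.

Lemma openV_ext (W W' : V -> Prop) : (forall v, W v <-> W' v) -> openV W -> openV W'.
Proof. intros HW [H1 H2]. split; apply (open_ext _ _ (fun t => HW _)); assumption. Qed.

Section BranchChart.

Variables h h' : R -> V.
Hypothesis h_inj : forall s t, h s = h t -> s = t.
Hypothesis h_h' : forall s t, h s = h' t <-> s = t /\ t < 0.
Hypothesis openV_iff : forall W, openV W <-> open (fun t => W (h t)) /\ open (fun t => W (h' t)).

Lemma is_chart_branch : is_chart h.
Proof.
  split; [exact h_inj|split; [|split]].
  - intros W HW. now apply openV_iff.
  - apply openV_iff. split.
    + apply (open_ext (fun _ => True)); [|apply open_true]. intros t. split; eauto.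
    + apply (open_ext (fun t => t < 0)); [|apply open_lt]. intros t. split.
      * intros Ht. exists t. now apply h_h'.
      * intros [s Hs]. now apply h_h' in Hs.
  - intros O HO. apply openV_iff. split.
    + apply (open_ext O); [|exact HO]. intros t. split.
      * intros Ht. now exists t.
      * intros [s [Hs E]]. now rewrite <- (h_inj _ _ E).
    + apply (open_ext (fun t => t < 0 /\ O t)); [|now apply open_and, HO; apply open_lt].
      intros t. split.
      * intros [Ht Ot]. exists t. split; [exact Ot|now apply h_h'].
      * intros [s [Os E]]. apply h_h' in E as [-> Ht]. now split.
Qed.

End BranchChart.

Lemma is_chart_i1 : is_chart i1.
Proof. apply (is_chart_branch i1 i2); [exact i1_inj|exact i1_i2|reflexivity]. Qed.

Lemma is_chart_i2 : is_chart i2.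
Proof.
  apply (is_chart_branch i2 i1); [exact i2_inj| |intros W; unfold openV; tauto].
  intros s t. split.
  - intros E. symmetry in E. apply i1_i2 in E as [-> Ht]. now split.
  - intros [-> Ht]. symmetry. now apply i1_i2.
Qed.

Lemma is_chart_comp (h : R -> V) (p q : R -> R) :
  is_chart h -> (forall s, q (p s) = s) -> (forall t, p (q t) = t) ->
  (forall s, continuous p s) -> (forall t, continuous q t) ->
  is_chart (fun s => h (p s)).
Proof.
  intros [h_inj [h_cont [h_img h_open]]] qp pq p_cont q_cont.
  split; [|split; [|split]].
  - intros s t E. rewrite <- (qp s), <- (qp t). f_equal. exact (h_inj _ _ E).
  - intros W HW. apply (open_comp p (fun t => W (h t)));
      [intros s _; apply p_cont|exact (h_cont W HW)].
  - refine (openV_ext _ _ _ h_img). intros v. split.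
    + intros [t <-]. exists (q t). now rewrite pq.
    + intros [s <-]. now exists (p s).
  - intros O HO. apply (openV_ext (fun v => exists t, O (q t) /\ h t = v)).
    + intros v. split.
      * intros [t [Ot <-]]. exists (q t). now rewrite pq.
      * intros [s [Os <-]]. exists (p s). now rewrite qp.
    + apply h_open, (open_comp q O); [intros t _; apply q_cont|exact HO].
Qed.

Definition i2_sq (s : R) : V := i2 (signed_sq s).

Lemma is_chart_i2_sq : is_chart i2_sq.
Proof.
  exact (is_chart_comp i2 signed_sq signed_sqrt is_chart_i2
           signed_sqrtK signed_sqK continuous_signed_sq continuous_signed_sqrt).
Qed.

Definition std_atlas (b : bool) : R -> V := if b then i1 else i2.
Definition sq_atlas (b : bool) : R -> V := if b then i1 else i2_sq.

Lemma smooth_in_charts_intro (h k : R -> V) (f : V -> V) (g : R -> R) (D : R -> Prop) :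
  (forall t, (exists s, k s = f (h t)) -> D t /\ k (g t) = f (h t)) -> smooth_on D g ->
  smooth_in_charts h f k.
Proof.
  intros Hg g_smooth. exists g. split.
  - intros t Ht. exact (proj2 (Hg t Ht)).
  - intros n t Ht. exact (g_smooth n t (proj1 (Hg t Ht))).
Qed.

Lemma smooth_in_charts_refl (h : R -> V) : smooth_in_charts h (fun v => v) h.
Proof.
  apply (smooth_in_charts_intro _ _ _ (fun t => t) (fun _ => True)); [|apply smooth_on_id].
  intros t _. now split.
Qed.

Lemma std_atlas_Cinf : Cinf_atlas bool std_atlas.
Proof.
  split; [|split].
  - intros [|]; [exact is_chart_i1|exact is_chart_i2].
  - intros v. destruct (V_cover v) as [[t E]|[t E]]; [exists true|exists false]; now exists t.
  - intros [|] [|]; try apply smooth_in_charts_refl;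
      apply (smooth_in_charts_intro _ _ _ (fun t => t) (fun _ => True)); try apply smooth_on_id;
      intros t [s E]; split; trivial; simpl in *.
    + symmetry in E. apply i1_i2 in E as [-> Ht]. now apply i2_neg.
    + apply i1_i2 in E as [-> Ht]. symmetry. now apply i2_neg.
Qed.

Lemma sq_atlas_Cinf : Cinf_atlas bool sq_atlas.
Proof.
  split; [|split].
  - intros [|]; [exact is_chart_i1|exact is_chart_i2_sq].
  - intros v. destruct (V_cover v) as [[t E]|[t E]].
    + now exists true, t.
    + exists false, (signed_sqrt t). simpl. unfold i2_sq. now rewrite signed_sqK.
  - intros [|] [|]; try apply smooth_in_charts_refl; simpl.
    + apply (smooth_in_charts_intro _ _ _ signed_sqrt (fun t => t < 0));
        [|exact smooth_on_signed_sqrt].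
      intros t [s E]. symmetry in E. apply i1_i2 in E as [-> Ht].
      split; [exact Ht|]. unfold i2_sq. rewrite signed_sqK. now apply i2_neg.
    + apply (smooth_in_charts_intro _ _ _ signed_sq (fun t => t < 0));
        [|exact smooth_on_signed_sq].
      intros t [s E]. apply i1_i2 in E as [-> Ht].
      split; [now apply signed_sq_lt0|symmetry; now apply i2_neg].
Qed.

Lemma smooth_in_charts_near (h k : R -> V) (f : V -> V) (x : R) :
  contRV h -> is_chart k -> contVV f -> smooth_in_charts h f k ->
  (exists s, k s = f (h x)) ->
  exists r, locally x (fun t => k (r t) = f (h t)) /\ ex_derive r x.
Proof.
  intros h_cont [_ [_ [k_img _]]] f_cont [r [Hr r_smooth]] Hx.
  exists r. split.
  - exact (filter_imp _ _ Hr (h_cont _ (f_cont _ k_img) x Hx)).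
  - exact (r_smooth 1%nat x Hx).
Qed.

Lemma i1_i2_at_left : at_left 0 (fun t => i1 t = i2 t).
Proof. apply (filter_forall (F := locally 0)). intros t Ht. symmetry. now apply i2_neg. Qed.

Lemma i1_neq_i2_0 : i1 0 <> i2 0.
Proof. intros E. apply i1_i2 in E. lra. Qed.

Lemma branch_values_vanish (r q : R -> R) :
  continuous r 0 -> continuous q 0 ->
  at_left 0 (fun t => i1 (r t) = i2_sq (q t)) -> i1 (r 0) <> i2_sq (q 0) ->
  r 0 = 0 /\ q 0 = 0.
Proof.
  intros r_cont q_cont Hrq Hne.
  assert (Hleft : at_left 0 (fun t => r t = signed_sq (q t) /\ signed_sq (q t) < 0)).
  { apply (filter_imp _ _ (fun t E => proj1 (i1_i2 _ _) E) Hrq). }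
  assert (E0 : r 0 = signed_sq (q 0)).
  { apply (continuous_at_left_unique r (fun t => signed_sq (q t))); [exact r_cont| |].
    - apply (continuous_comp q signed_sq); [exact q_cont|apply continuous_signed_sq].
    - exact (filter_imp _ _ (fun t H => proj1 H) Hleft). }
  assert (r0 : r 0 = 0).
  { destruct (Req_dec (r 0) 0) as [Z|Z]; [exact Z|exfalso].
    apply Hne. unfold i2_sq. rewrite <- E0. symmetry. apply i2_neg.
    assert (r 0 <= 0); [|lra].
    apply continuous_at_left_le; [exact r_cont|].
    revert Hleft. apply filter_imp. intros t [E Hn]. lra. }
  split; [exact r0|].
  rewrite <- (signed_sqrtK (q 0)), <- E0, r0, signed_sqrt_nonneg by lra. apply sqrt_0.
Qed.

Lemma is_derive_0_of_left_neg_sq (r q : R -> R) (x : R) :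
  ex_derive r x -> ex_derive q x -> r x = 0 -> q x = 0 ->
  at_left x (fun t => r t = - (q t * q t)) -> is_derive r x 0.
Proof.
  intros [l Hr] [m Hq] r0 q0 Hleft.
  assert (Hsq : is_derive (fun t => - (q t * q t)) x (- (m * q x + q x * m))).
  { exact (is_derive_opp _ _ _ (is_derive_mult _ _ _ _ _ Hq Hq Rmult_comm)). }
  rewrite q0, Rmult_0_r, Rmult_0_l, Rplus_0_r, Ropp_0 in Hsq.
  replace 0 with l; [exact Hr|].
  apply (is_derive_at_left_unique r _ x l _ Hr Hsq); [|exact Hleft].
  rewrite r0, q0. simpl. ring.
Qed.

Section NoDiffeoAtBranch.

Variables f g : V -> V.
Hypothesis gf : forall v, g (f v) = v.
Variables ha hb : R -> V.
Hypothesis ha_hb_left : at_left 0 (fun t => ha t = hb t).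
Hypothesis ha_hb_0 : ha 0 <> hb 0.

Lemma images_agree_at_left (k k' : R -> V) (r q : R -> R) :
  locally 0 (fun t => k (r t) = f (ha t)) -> locally 0 (fun t => k' (q t) = f (hb t)) ->
  at_left 0 (fun t => k (r t) = k' (q t)).
Proof.
  intros Hr Hq.
  generalize (filter_and _ _ ha_hb_left
                (filter_and _ _ (at_left_of_locally _ _ Hr) (at_left_of_locally _ _ Hq))).
  apply filter_imp. intros t [E [Er Eq]]. now rewrite Er, Eq, E.
Qed.

Lemma branch_images_not_in_one_chart (k : R -> V) (r q : R -> R) :
  (forall s t, k s = k t -> s = t) -> continuous r 0 -> continuous q 0 ->
  locally 0 (fun t => k (r t) = f (ha t)) -> locally 0 (fun t => k (q t) = f (hb t)) ->
  False.
Proof.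
  intros k_inj r_cont q_cont Hr Hq.
  apply ha_hb_0. rewrite <- (gf (ha 0)), <- (gf (hb 0)).
  rewrite <- (locally_singleton _ _ Hr), <- (locally_singleton _ _ Hq).
  do 2 f_equal. apply (continuous_at_left_unique r q 0 r_cont q_cont).
  generalize (images_agree_at_left k k r q Hr Hq). apply filter_imp. intros t. apply k_inj.
Qed.

Hypothesis g_cont : contVV g.

Lemma no_smooth_inverse_at_branch (r q : R -> R) :
  is_chart ha -> smooth_in_charts i1 g ha ->
  locally 0 (fun t => i1 (r t) = f (ha t)) -> locally 0 (fun t => i2_sq (q t) = f (hb t)) ->
  ex_derive r 0 -> ex_derive q 0 -> False.
Proof.
  intros ha_chart g_smooth Hr Hq Dr Dq.
  assert (Hrq := images_agree_at_left _ _ _ _ Hr Hq).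
  assert (Hne : i1 (r 0) <> i2_sq (q 0)).
  { rewrite (locally_singleton _ _ Hr), (locally_singleton _ _ Hq). intros E.
    apply ha_hb_0. now rewrite <- (gf (ha 0)), E, gf. }
  destruct (branch_values_vanish r q (ex_derive_continuous r 0 Dr) (ex_derive_continuous q 0 Dq)
              Hrq Hne) as [r0 q0].
  assert (Dr0 : is_derive r 0 0).
  { apply (is_derive_0_of_left_neg_sq r q 0 Dr Dq r0 q0).
    revert Hrq. apply filter_imp. intros t E.
    apply i1_i2 in E as [-> Hneg]. apply signed_sq_neg, signed_sq_lt0, Hneg. }
  destruct (smooth_in_charts_near i1 ha g 0 (proj1 (proj2 is_chart_i1)) ha_chart g_cont g_smooth)
    as [c [Hc Dc]].
  { exists 0. rewrite <- r0 at 2. now rewrite (locally_singleton _ _ Hr), gf. }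
  assert (Hcr : locally 0 (fun t => c (r t) = t)).
  { assert (r_lim := ex_derive_continuous r 0 Dr). unfold continuous in r_lim. rewrite r0 in r_lim.
    assert (Hc_r : locally 0 (fun t => ha (c (r t)) = g (i1 (r t)))) by exact (r_lim _ Hc).
    generalize (filter_and _ _ Hc_r Hr). apply filter_imp. intros t [E1 E2].
    apply (proj1 ha_chart). now rewrite E1, E2, gf. }
  rewrite <- r0 in Dc.
  exact (is_derive_neq0_of_left_inverse r c 0 0 Hcr Dr0 Dc eq_refl).
Qed.

End NoDiffeoAtBranch.

Lemma std_sq_not_isomorphic : ~ Cinf_isomorphic bool std_atlas bool sq_atlas.
Proof.
  intros [f [g [gf [_ [f_cont [g_cont [f_smooth g_smooth]]]]]]].
  assert (Hrep : forall a : bool, exists j r,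
             locally 0 (fun t => sq_atlas j (r t) = f (std_atlas a t)) /\ ex_derive r 0).
  { intros a. destruct (proj1 (proj2 sq_atlas_Cinf) (f (std_atlas a 0))) as [j Hj].
    exists j. apply smooth_in_charts_near;
      [apply std_atlas_Cinf|apply sq_atlas_Cinf|exact f_cont|apply f_smooth|exact Hj]. }
  destruct (Hrep true) as [j [r [Hr Dr]]], (Hrep false) as [j' [q [Hq Dq]]].
  assert (i2_i1_at_left : at_left 0 (fun t => i2 t = i1 t)).
  { generalize i1_i2_at_left. apply filter_imp. now intros t ->. }
  assert (Cr := ex_derive_continuous r 0 Dr). assert (Cq := ex_derive_continuous q 0 Dq).
  destruct j, j'; simpl in *.
  - exact (branch_images_not_in_one_chart f g gf i1 i2 i1_i2_at_left i1_neq_i2_0 i1 r q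
             i1_inj Cr Cq Hr Hq).
  - exact (no_smooth_inverse_at_branch f g gf i1 i2 i1_i2_at_left i1_neq_i2_0 g_cont r q
             is_chart_i1 (g_smooth true true) Hr Hq Dr Dq).
  - exact (no_smooth_inverse_at_branch f g gf i2 i1 i2_i1_at_left (not_eq_sym i1_neq_i2_0)
             g_cont q r is_chart_i2 (g_smooth true false) Hq Hr Dq Dr).
  - exact (branch_images_not_in_one_chart f g gf i1 i2 i1_i2_at_left i1_neq_i2_0 i2_sq r q
             (proj1 is_chart_i2_sq) Cr Cq Hr Hq).
Qed.

Theorem mainTheorem4 :
  exists (I : Type) (h : I -> R -> V) (J : Type) (k : J -> R -> V),
    Cinf_atlas I h /\ Cinf_atlas J k /\ ~ Cinf_isomorphic I h J k.
Proof.
  exists bool, std_atlas, bool, sq_atlas.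
  exact (conj std_atlas_Cinf (conj sq_atlas_Cinf std_sq_not_isomorphic)).
Qed.
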